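(* Let $V:S^1\to\mathbb R$ be continuous and odd, and for $D\ge0$ let $c_k=-(2\pi k)^2D+4\pi k v_k$ with $v_k=\int_0^{1/2}V(\theta)\sin(2\pi k\theta)\,d\theta$. (a) If $V>0$ on $\left]0,\tfrac12\right[$, then $c_1>0$ for all sufficiently small $D\ge 0$. (b) Suppose there is $\theta_0\in\left]0,\tfrac12\right[$ such that $V>0$ on $\left]0,\theta_0\right[$, $V(\theta_0)=0$, $V<0$ on $\left]\theta_0,\tfrac12\right[$, and $V(\theta)\ge V(\tfrac12-\theta)$ for all $\theta\in\left]\min(\theta_0,\tfrac12-\theta_0),\tfrac14\right[$. Then $c_2>0$ for all sufficiently small $D\ge0$.
   Context: $S^1=\mathbb R/\mathbb Z$; a function on $S^1$ is identified with a 1-periodic function on $\mathbb R$. The numbers $c_k$ are the eigenvalues of the linearization of the equation $\partial_t f=D\partial_\theta^2 f+\partial_\theta((V*f)f)$, $(V*f)(\theta)=\int_{S^1}V(\theta-\psi)f(\psi)d\psi$, around the constant solution $f\equiv1$. *)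

From Stdlib Require Import Reals.
Open Scope R_scope.

Definition vk_integrand (V : R -> R) (k : nat) : R -> R :=
  fun t => V t * sin (2 * PI * INR k * t).

Definition ck (D : R) (k : nat) (vk : R) : R :=
  - (2 * PI * INR k) ^ 2 * D + 4 * PI * INR k * vk.

From Stdlib Require Import Reals Lra Lia.
From Coquelicot Require Import Coquelicot.
Open Scope R_scope.

(* Since c_k = 4 pi k (v_k - pi k D), c_k > 0 for all 0 <= D < v_k / (pi k)
   as soon as v_k > 0; so both parts reduce to the positivity of a Fourier
   coefficient v_k (lemma [ck_pos_small_D]).  The integrals are handled with
   Coquelicot's total integral [RInt], which agrees with [RiemannInt].
   (a) On ]0,1/2[ both V and sin(2 pi theta) are positive, so v_1 > 0.
   (b) The reflection theta |-> 1/2 - theta maps [1/4,1/2] onto [0,1/4] and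
       changes the sign of sin(4 pi theta), hence
         v_2 = int_0^{1/4} (V(theta) - V(1/2 - theta)) sin(4 pi theta).
       With m = min(theta0, 1/2 - theta0) the integrand is > 0 on ]0,m[
       (V(theta) > 0 > V(1/2 - theta)) and >= 0 on ]m,1/4[ (symmetry
       hypothesis), so v_2 > 0. *)

Lemma ck_pos_small_D (k : nat) (v : R) : (0 < k)%nat -> v > 0 ->
  exists D0, D0 > 0 /\ forall D, 0 <= D < D0 -> ck D k v > 0.
Proof.
  intros Hk Hv.
  set (a := PI * INR k).
  assert (Ha : 0 < a).
  { apply Rmult_lt_0_compat; [apply PI_RGT_0 | apply lt_0_INR; lia]. }
  exists (v / a). split.
  - apply Rdiv_lt_0_compat; lra.
  - intros D [HD0 HDa].
    assert (HaD : a * D < v).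
    { apply (Rmult_lt_compat_l a) in HDa; [|lra].
      replace (a * (v / a)) with v in HDa by (field; lra). lra. }
    unfold ck.
    replace (- (2 * PI * INR k) ^ 2 * D + 4 * PI * INR k * v)
      with (4 * a * (v - a * D)) by (unfold a; ring).
    apply Rmult_lt_0_compat; lra.
Qed.

Lemma sin_pos_half_period (k : nat) (t : R) :
  0 < INR k * t < 1/2 -> 0 < sin (2 * PI * INR k * t).
Proof.
  intros Hkt. pose proof PI_RGT_0. apply sin_gt_0; nra.
Qed.

Lemma continuous_of_continuity (f : R -> R) :
  continuity f -> forall x, continuous f x.
Proof. intros Hf x. apply continuity_pt_filterlim, Hf. Qed.

Lemma continuous_affine (u c x : R) : continuous (fun t => u * t + c) x.
Proof.
  apply (@ex_derive_continuous R_AbsRing R_NormedModule). auto_derive. auto.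
Qed.

Lemma continuous_reflect (f : R -> R) (c : R) :
  (forall x, continuous f x) -> forall x, continuous (fun t => f (c - t)) x.
Proof.
  intros Hf x.
  apply (continuous_ext (fun t => f (-1 * t + c))); [intros t; f_equal; ring |].
  apply (continuous_comp (fun t => -1 * t + c) f); [apply continuous_affine | apply Hf].
Qed.

Lemma continuous_sin_linear (c x : R) : continuous (fun t => sin (c * t)) x.
Proof.
  apply (@ex_derive_continuous R_AbsRing R_NormedModule). auto_derive. auto.
Qed.

Lemma vk_integrand_continuous (V : R -> R) (k : nat) :
  continuity V -> forall x, continuous (vk_integrand V k) x.
Proof.
  intros HV x. apply (continuous_mult V (fun t => sin (2 * PI * INR k * t))).
  - apply continuous_of_continuity, HV.
  - apply continuous_sin_linear.
Qed.

Lemma ex_RInt_everywhere_continuous (f : R -> R) (a b : R) :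
  (forall x, continuous f x) -> ex_RInt f a b.
Proof. intros Hf. apply (@ex_RInt_continuous R_CompleteNormedModule); auto. Qed.

Lemma RInt_reflect (f : R -> R) (c a b : R) :
  (forall x, continuous f x) ->
  RInt f (c - b) (c - a) = RInt (fun t => f (c - t)) a b.
Proof.
  intros Hf.
  assert (Hfr : forall x, continuous (fun t => f (-1 * t + c)) x).
  { intros x. apply (continuous_ext (fun t => f (c - t))); [intros t; f_equal; ring |].
    apply continuous_reflect, Hf. }
  replace (c - b) with (-1 * b + c) by ring.
  replace (c - a) with (-1 * a + c) by ring.
  rewrite <- opp_RInt_swap by (apply ex_RInt_everywhere_continuous; auto).
  rewrite <- RInt_comp_lin by (apply ex_RInt_everywhere_continuous; auto).
  rewrite <- RInt_opp.
  2:{ apply ex_RInt_everywhere_continuous. intros x.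
      apply (continuous_scal_r (-1) (fun t => f (-1 * t + c))), Hfr. }
  apply RInt_ext. intros x _. unfold scal, opp; simpl; unfold mult; simpl.
  replace (-1 * x + c) with (c - x) by ring. ring.
Qed.

Lemma sin_4pi_reflect (t : R) :
  sin (2 * PI * INR 2 * (1/2 - t)) = - sin (2 * PI * INR 2 * t).
Proof.
  replace (2 * PI * INR 2 * (1/2 - t)) with (- (2 * PI * INR 2 * t) + 2 * INR 1 * PI)
    by (simpl; field).
  rewrite sin_period. apply sin_neg.
Qed.

Lemma v2_folded (V : R -> R) : continuity V ->
  RInt (vk_integrand V 2) 0 (1/2) =
  RInt (fun t => (V t - V (1/2 - t)) * sin (2 * PI * INR 2 * t)) 0 (1/4).
Proof.
  intros HV.
  set (g := vk_integrand V 2).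
  assert (Hg : forall x, continuous g x) by (apply vk_integrand_continuous; auto).
  rewrite <- (RInt_Chasles g 0 (1/4) (1/2))
    by (apply ex_RInt_everywhere_continuous; auto).
  replace (RInt g (1/4) (1/2)) with (RInt (fun t => g (1/2 - t)) 0 (1/4)).
  2:{ rewrite <- RInt_reflect by auto. f_equal; field. }
  rewrite <- (RInt_plus g)
    by (apply ex_RInt_everywhere_continuous; auto using continuous_reflect).
  apply RInt_ext. intros x _. unfold g, vk_integrand, plus; simpl; fold (INR 2).
  rewrite sin_4pi_reflect. ring.
Qed.

Lemma v1_pos (V : R -> R) : continuity V ->
  (forall t, 0 < t < 1/2 -> V t > 0) ->
  0 < RInt (vk_integrand V 1) 0 (1/2).
Proof.
  intros HV Hpos. apply RInt_gt_0; [lra | |].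
  - intros x Hx. unfold vk_integrand. apply Rmult_lt_0_compat.
    + apply Hpos; auto.
    + apply sin_pos_half_period. rewrite INR_1. lra.
  - intros x _. apply vk_integrand_continuous; auto.
Qed.

Lemma v2_pos (V : R -> R) (theta0 : R) : continuity V ->
  0 < theta0 < 1/2 ->
  (forall t, 0 < t < theta0 -> V t > 0) ->
  (forall t, theta0 < t < 1/2 -> V t < 0) ->
  (forall t, Rmin theta0 (1/2 - theta0) < t < 1/4 -> V t >= V (1/2 - t)) ->
  0 < RInt (vk_integrand V 2) 0 (1/2).
Proof.
  intros HV Hth Hpos Hneg Hsym. rewrite v2_folded by auto.
  set (h := fun t => (V t - V (1/2 - t)) * sin (2 * PI * INR 2 * t)).
  assert (Hh : forall x, continuous h x).
  { assert (HVc := continuous_of_continuity V HV).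
    intros x. apply (continuous_mult (fun t => V t - V (1/2 - t))).
    - apply (@continuous_minus R_UniformSpace R_AbsRing R_NormedModule); auto.
      apply (continuous_reflect V (1/2) HVc).
    - apply continuous_sin_linear. }
  assert (Hsin : forall t, 0 < t < 1/4 -> 0 < sin (2 * PI * INR 2 * t)).
  { intros t Ht. apply sin_pos_half_period. simpl. lra. }
  set (m := Rmin theta0 (1/2 - theta0)).
  assert (Hm : 0 < m <= theta0 /\ m <= 1/2 - theta0).
  { unfold m, Rmin. destruct Rle_dec; lra. }
  rewrite <- (RInt_Chasles h 0 m (1/4))
    by (apply ex_RInt_everywhere_continuous; auto).
  assert (Hnear : 0 < RInt h 0 m).
  { apply RInt_gt_0; [lra | | auto]. intros x Hx. unfold h.
    assert (V x > 0) by (apply Hpos; lra).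
    assert (V (1/2 - x) < 0) by (apply Hneg; lra).
    apply Rmult_lt_0_compat; [lra | apply Hsin; lra]. }
  assert (Hfar : 0 <= RInt h m (1/4)).
  { apply RInt_ge_0; [lra | apply ex_RInt_everywhere_continuous; auto |].
    intros x Hx. unfold h.
    assert (V x >= V (1/2 - x)) by (apply Hsym; unfold m in Hx; lra).
    apply Rmult_le_pos; [lra | apply Rlt_le, Hsin; lra]. }
  unfold plus; simpl. lra.
Qed.

Theorem mainTheorem3 (V : R -> R)
  (HVcont : continuity V)
  (HVper : forall x, V (x + 1) = V x)
  (HVodd : forall x, V (- x) = - V x)
  (pr1 : Riemann_integrable (vk_integrand V 1) 0 (1/2))
  (pr2 : Riemann_integrable (vk_integrand V 2) 0 (1/2)) :
  ((forall t, 0 < t < 1/2 -> V t > 0) ->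
     exists D0, D0 > 0 /\
       forall D, 0 <= D < D0 -> ck D 1 (RiemannInt pr1) > 0)
  /\
  (forall theta0, 0 < theta0 < 1/2 ->
     (forall t, 0 < t < theta0 -> V t > 0) ->
     V theta0 = 0 ->
     (forall t, theta0 < t < 1/2 -> V t < 0) ->
     (forall t, Rmin theta0 (1/2 - theta0) < t < 1/4 -> V t >= V (1/2 - t)) ->
     exists D0, D0 > 0 /\
       forall D, 0 <= D < D0 -> ck D 2 (RiemannInt pr2) > 0).
Proof.
  split.
  - intros Hpos. apply ck_pos_small_D; [lia |].
    rewrite <- RInt_Reals. apply v1_pos; auto.
  - intros theta0 Hth Hpos _ Hneg Hsym. apply ck_pos_small_D; [lia |].
    rewrite <- RInt_Reals. apply (v2_pos V theta0); auto.
Qed.
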